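(* Let $\Delta\ge\omega\ge u+1\ge2$ and $p\ge1$ be integers, let $H$ be a graph containing $K_u$ as a subgraph, and let $L=\mathrm{T}_\omega\big(\Delta+u\lfloor\frac{\Delta}{\omega-u}\rfloor\big)$. Then \[\mathcal{N}\Big(H,\Big\lfloor\frac{p}{k^u(L)}\Big\rfloor L\Big)\le\mathrm{ex}_u(p,H,\{K_u\vee I_{\Delta+1},K_{\omega+1}\}).\]
   Context: All graphs are finite and simple. $\mathcal{N}(H,G)$ is the number of (not necessarily induced) subgraphs of $G$ isomorphic to $H$; $k^u(G)=\mathcal{N}(K_u,G)$. $aL$ is the disjoint union of $a$ copies of $L$. $\mathrm{T}_r(n)$ is the Turán graph (complete $r$-partite on $n$ vertices with part sizes $\lfloor n/r\rfloor$ or $\lceil n/r\rceil$). $K_u\vee I_{\Delta+1}$ is the complete split graph: a $u$-clique, an independent set of $\Delta+1$ vertices, and all edges between them. $\mathrm{ex}_u(p,H,\mathcal{F})\in[0,\infty]$ is the supremum of $\mathcal{N}(H,G)$ over all graphs $G$ with $k^u(G)=p$ having no subgraph isomorphic to a member of $\mathcal{F}$. *)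

From HB Require Import structures.
From mathcomp Require Import all_boot all_order all_algebra.
From mathcomp Require Import classical_sets reals ereal.
Set Implicit Arguments. Unset Strict Implicit. Unset Printing Implicit Defensive.

Record sgraph := SGraph {
  vert : finType;
  adj : rel vert;
  adj_sym : symmetric adj;
  adj_irr : irreflexive adj }.

Definition gedges (G : sgraph) : {set {set vert G}} :=
  [set [set xy.1; xy.2] | xy : (vert G * vert G)%type & adj xy.1 xy.2].

(* (S, E) is a subgraph of G (vertex set S, edge set E) isomorphic to H. *)
Definition is_copy (H G : sgraph) (S : {set vert G}) (E : {set {set vert G}}) : bool :=
  [&& E \subset gedges G, [forall e in E, e \subset S] &
   [exists f : {ffun vert H -> vert G},
     [&& injectiveb f, S == f @: setT &
         [forall x, forall y, adj x y == ([set f x; f y] \in E)]]]].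

Definition Ncount (H G : sgraph) : nat :=
  #|[set SE : {set vert G} * {set {set vert G}} | is_copy H SE.1 SE.2]|.

Definition has_subgraph (F G : sgraph) : Prop :=
  exists f : vert F -> vert G, injective f /\ forall x y, adj x y -> adj (f x) (f y).

Definition Kadj n : rel 'I_n := fun i j => i != j.
Lemma Kadj_sym n : symmetric (@Kadj n).
Proof. by move=> i j; rewrite /Kadj eq_sym. Qed.
Lemma Kadj_irr n : irreflexive (@Kadj n).
Proof. by move=> i; rewrite /Kadj eqxx. Qed.
Definition Kcomp n : sgraph := SGraph (@Kadj_sym n) (@Kadj_irr n).

Definition kcount (u : nat) (G : sgraph) : nat := Ncount (Kcomp u) G.

(* Turan graph T_r(n): vertex i is in part (i mod r); parts have sizes
   floor(n/r) or ceil(n/r). *)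
Definition Tadj r n : rel 'I_n := fun i j => (i %% r != j %% r)%N.
Lemma Tadj_sym r n : symmetric (@Tadj r n).
Proof. by move=> i j; rewrite /Tadj eq_sym. Qed.
Lemma Tadj_irr r n : irreflexive (@Tadj r n).
Proof. by move=> i; rewrite /Tadj eqxx. Qed.
Definition Turan r n : sgraph := SGraph (@Tadj_sym r n) (@Tadj_irr r n).

(* Complete split graph K_u \/ I_m: vertices 0..u-1 form the clique,
   vertices u..u+m-1 the independent set. *)
Definition Sadj u m : rel 'I_(u + m) := fun i j => (i != j) && ((i < u) || (j < u))%N.
Lemma Sadj_sym u m : symmetric (@Sadj u m).
Proof. by move=> i j; rewrite /Sadj eq_sym orbC. Qed.
Lemma Sadj_irr u m : irreflexive (@Sadj u m).
Proof. by move=> i; rewrite /Sadj eqxx. Qed.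
Definition Ksplit u m : sgraph := SGraph (@Sadj_sym u m) (@Sadj_irr u m).

Definition Dadj a (L : sgraph) : rel ('I_a * vert L)%type :=
  fun v w => (v.1 == w.1) && adj v.2 w.2.
Lemma Dadj_sym a L : symmetric (@Dadj a L).
Proof. by move=> v w; rewrite /Dadj eq_sym adj_sym. Qed.
Lemma Dadj_irr a L : irreflexive (@Dadj a L).
Proof. by move=> v; rewrite /Dadj adj_irr andbF. Qed.
Definition dunion a (L : sgraph) : sgraph := SGraph (@Dadj_sym a L) (@Dadj_irr a L).

(* ex_u(p, H, F) in [0, +oo]: supremum of N(H,G) over graphs G with k^u(G) = p
   containing no member of F; the value 0 is included so that the supremum of an
   empty family is 0 (as a supremum in [0, oo]). *)
Definition ex_u (R : realType) (u p : nat) (H : sgraph) (F : sgraph -> Prop) : \bar R :=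
  ereal_sup ([set 0%E] `|`
    [set x | exists G : sgraph, [/\ kcount u G = p,
        (forall Fm, F Fm -> ~ has_subgraph Fm G) & x = ((Ncount H G)%:R)%:E]]).

Arguments Kcomp : clear implicits.
Arguments Turan : clear implicits.
Arguments Ksplit : clear implicits.
Arguments dunion : clear implicits.

From HB Require Import structures.
From mathcomp Require Import all_boot all_order all_algebra.
From mathcomp Require Import classical_sets reals ereal.
From mathcomp Require Import zify.
Set Implicit Arguments. Unset Strict Implicit. Unset Printing Implicit Defensive.
Import Order.TTheory Num.Theory.

(* Take [a = p / k^u(L)] disjoint copies of [L = T_w(n)], where [n = D + u q]
   and [q = D / (w - u)], and [p - a k^u(L)] disjoint copies of [K_u]: this
   graph has exactly [p] copies of [K_u] and contains [aL].  Both forbidden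
   graphs have a vertex adjacent to all others, so a copy of either lies inside
   one component, hence inside [T_w(n)].  But [T_w(n)] is [w]-colourable, so it
   has no [K_{w+1}]; and since [q w <= n], each part of [T_w(n)] has at least
   [q] vertices, so a [K_u] in it has at most [n - u q = D] common neighbours. *)

(* In [is_copy], [setT] is the classical full set, viewed as a predicate. *)
Lemma imset_classic_setT (T T' : finType) (f : T -> T') :
  [set f x | x in [set: T]%classic] = [set f x | x : T].
Proof.
by apply/finset.setP=> y; apply/imsetP/imsetP; case=> x _ ->; exists x; rewrite ?in_setT.
Qed.

Lemma mem_gedges (G : sgraph) (a b : vert G) : adj a b -> [set a; b] \in gedges G.
Proof. by move=> ab; apply/imsetP; exists (a, b); rewrite ?inE. Qed.

Lemma gedgesP (G : sgraph) e : e \in gedges G -> exists a b, adj a b /\ e = [set a; b].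
Proof. by case/imsetP=> -[a b]; rewrite inE /= => ab ->; exists a, b. Qed.

Lemma adj_set2 (G : sgraph) (x y a b : vert G) :
  x != y -> [set x; y] = [set a; b] -> adj a b -> adj x y.
Proof.
move=> nxy exy ab.
have : x \in [set a; b] by rewrite -exy set21.
have : y \in [set a; b] by rewrite -exy set22.
move: nxy; rewrite !inE => nxy /orP[]/eqP ey /orP[]/eqP ex; subst x y => //.
- by rewrite eqxx in nxy.
- by rewrite adj_sym.
- by rewrite eqxx in nxy.
Qed.

Definition cliques u (G : sgraph) : {set {set vert G}} :=
  [set S : {set vert G} | (#|S| == u) && [forall x in S, forall y in S, (x != y) ==> adj x y]].

Definition pairs_in (T : finType) (S : {set T}) : {set {set T}} :=
  [set e : {set T} | (e \subset S) && (#|e| == 2)].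

Lemma cliquesP u (G : sgraph) (S : {set vert G}) :
  reflect (#|S| = u /\ {in S &, forall x y, x != y -> adj x y}) (S \in cliques u G).
Proof.
rewrite inE; apply: (iffP andP) => [[/eqP cS /forall_inP cl] | [-> cl]].
  by split=> // x y xS yS; apply/implyP/(forall_inP (cl x xS)).
split=> //; apply/forall_inP=> x xS; apply/forall_inP=> y yS; apply/implyP; exact: cl.
Qed.

Lemma copy_Kcomp_clique u (G : sgraph) (S : {set vert G}) (E : {set {set vert G}}) :
  is_copy (Kcomp u) S E -> S \in cliques u G /\ E = pairs_in S.
Proof.
case/and3P=> EG ES /existsP[f /and3P[/injectiveP fi /eqP SE /forallP fE]].
have fE' i j : (i != j) = ([set f i; f j] \in E) by exact: (eqP (forallP (fE i) j)).
rewrite imset_classic_setT in SE; split.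
  apply/cliquesP; split; first by rewrite SE card_imset // card_ord.
  rewrite SE => _ _ /imsetP[i _ ->] /imsetP[j _ ->] nij.
  have : i != j by apply: contraNneq nij => ->.
  rewrite fE' => /(fintype.subsetP EG) /gedgesP[a [b [ab e]]].
  exact: adj_set2 nij e ab.
apply/finset.setP=> e; rewrite inE; apply/idP/andP.
  move=> eE; split; first exact: (forall_inP ES).
  have /gedgesP[a [b [ab ->]]] := fintype.subsetP EG e eE.
  have nab : a != b by apply: contraTneq ab => ->; rewrite adj_irr.
  by rewrite cards2 nab.
case=> eS /cards2P[a [b [nab ee]]].
have : a \in S by apply: (fintype.subsetP eS); rewrite ee set21.
have : b \in S by apply: (fintype.subsetP eS); rewrite ee set22.
rewrite SE => /imsetP[j _ bj] /imsetP[i _ ai].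
by rewrite ee ai bj -fE'; apply: contraNneq nab; rewrite ai bj => ->.
Qed.

Lemma clique_copy_Kcomp u (G : sgraph) (S : {set vert G}) :
  S \in cliques u G -> is_copy (Kcomp u) S (pairs_in S).
Proof.
case/cliquesP=> cS cl.
pose f := [ffun i : 'I_u => enum_val (cast_ord (esym cS) i)].
have fi : injective f by move=> i j; rewrite !ffunE => /enum_val_inj /cast_ord_inj.
have fS i : f i \in S by rewrite ffunE enum_valP.
apply/and3P; split.
- apply/fintype.subsetP=> e; rewrite inE => /andP[eS /cards2P[a [b [nab ee]]]].
  by rewrite ee mem_gedges // cl // (fintype.subsetP eS) // ee !inE eqxx ?orbT.
- by apply/forall_inP=> e; rewrite inE => /andP[].
apply/existsP; exists f; apply/and3P; split; first exact/injectiveP.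
  rewrite imset_classic_setT eq_sym eqEcard card_imset // card_ord cS leqnn andbT.
  by apply/fintype.subsetP=> _ /imsetP[i _ ->]; exact: fS.
apply/forallP=> i; apply/forallP=> j; rewrite inE cards2 eqSS (inj_eq fi).
have -> : [set f i; f j] \subset S.
  by apply/fintype.subsetP=> y; rewrite !inE => /orP[]/eqP->.
by rewrite /= /Kadj; case: (i != j).
Qed.

Lemma kcount_cliques u (G : sgraph) : kcount u G = #|cliques u G|.
Proof.
rewrite /kcount /Ncount.
have -> : [set SE | is_copy (Kcomp u) SE.1 SE.2] = [set (S, pairs_in S) | S in cliques u G].
  apply/finset.setP=> -[S E]; rewrite inE /=; apply/idP/imsetP.
    by case/copy_Kcomp_clique=> Sc ->; exists S.
  by case=> S' Sc [-> ->]; exact: clique_copy_Kcomp.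
by rewrite card_imset // => S S' [].
Qed.

Lemma leq_Ncount (H A B : sgraph) (h : vert A -> vert B) :
  injective h -> {homo h : x y / adj x y} -> Ncount H A <= Ncount H B.
Proof.
move=> hi ha; rewrite /Ncount.
have h_set2 a b : h @: [set a; b] = [set h a; h b] by rewrite imsetU1 imset_set1.
pose hcopy (SE : {set vert A} * {set {set vert A}}) :=
  (h @: SE.1, [set h @: e | e : {set vert A} in SE.2]).
have hcopy_inj : injective hcopy.
  by move=> [S E] [S' E'] [/(imset_inj hi) -> /(imset_inj (imset_inj hi)) ->].
rewrite -(card_imset _ hcopy_inj); apply: subset_leq_card.
apply/fintype.subsetP=> _ /imsetP[[S E] + ->]; rewrite !inE /=.
case/and3P=> EG ES /existsP[f /and3P[/injectiveP fi /eqP SE /forallP fE]].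
apply/and3P; split.
- apply/fintype.subsetP=> _ /imsetP[e eE ->].
  have /gedgesP[a [b [ab ->]]] := fintype.subsetP EG e eE.
  by rewrite h_set2; exact: mem_gedges (ha _ _ ab).
- by apply/forall_inP=> _ /imsetP[e eE ->]; apply: imsetS; exact: (forall_inP ES).
apply/existsP; exists [ffun x => h (f x)]; apply/and3P; split.
- by apply/injectiveP=> x y; rewrite !ffunE => /hi /fi.
- rewrite SE !imset_classic_setT -imset_comp; apply/eqP/eq_imset=> x.
  exact: (esym (ffunE (fun x0 => h (f x0)) x)).
apply/forallP=> x; apply/forallP=> y; rewrite !ffunE -h_set2.
by rewrite (mem_imset _ _ (imset_inj hi)); exact: (forallP (fE x) y).
Qed.

Lemma card_cliques_partition u (G : sgraph) (I : finType) (c : vert G -> I) : 0 < u ->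
  (forall x y, adj x y -> c x = c y) ->
  #|cliques u G| = \sum_(i : I) #|[set S in cliques u G | [forall x in S, c x == i]]|.
Proof.
move=> u_gt0 c_adj.
under eq_bigr=> i _ do rewrite -sum1dep_card.
rewrite -sum1_card (exchange_big_dep (mem (cliques u G))) => [|i S _ /andP[] //].
apply: eq_bigr=> S Sc; have /cliquesP[cS cl] := Sc.
have [x0 x0S] : exists x0, x0 \in S by apply/set0Pn; rewrite -card_gt0 cS.
rewrite sum1dep_card -(cards1 (c x0)); apply: eq_card=> i.
rewrite finset.in_set1 finset.in_set Sc /=.
apply/eqP/forall_inP=> [-> x xS | /(_ x0 x0S)/eqP //].
by case: (eqVneq x x0) => [-> // | nx]; rewrite (c_adj _ _ (cl _ _ xS x0S nx)).
Qed.

Lemma card_cliques_image u (G A : sgraph) (e : vert A -> vert G) (P : pred (vert G)) :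
  injective e -> (forall x y, adj (e x) (e y) = adj x y) ->
  (forall v, P v <-> exists x, v = e x) ->
  #|[set S in cliques u G | [forall v in S, P v]]| = #|cliques u A|.
Proof.
move=> ei ea eP.
rewrite -(card_imset _ (imset_inj ei)); apply: eq_card=> S; rewrite finset.in_set.
apply/andP/imsetP=> [[Sc /forall_inP SP] | [C Cc ->]].
- have /cliquesP[cS cl] := Sc.
  have SE : S = e @: (e @^-1: S).
    apply/finset.setP=> v; apply/idP/imsetP=> [vS | [x + ->]]; last by rewrite inE.
    by have [x vx] := (eP v).1 (SP v vS); exists x; rewrite // inE -vx.
  exists (e @^-1: S) => //; apply/cliquesP; split.
    by rewrite -(card_imset _ ei) -SE.
  by move=> x y; rewrite !inE -ea => xS yS nxy; apply: cl; rewrite ?(inj_eq ei).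
- have /cliquesP[cC cl] := Cc; split.
    apply/cliquesP; split; first by rewrite card_imset.
    by move=> _ _ /imsetP[x xC ->] /imsetP[y yC ->]; rewrite (inj_eq ei) ea; exact: cl.
  by apply/forall_inP=> _ /imsetP[x _ ->]; apply/eP; exists x.
Qed.

Lemma card_cliques_Kcomp u : #|cliques u (Kcomp u)| = 1.
Proof.
rewrite -(cards1 [set: 'I_u]); apply: eq_card=> S; rewrite finset.in_set1.
apply/cliquesP/eqP=> [[cS _] | ->].
  by apply/eqP; rewrite eqEcard finset.subsetT cardsT card_ord cS /=.
by rewrite cardsT card_ord; split.
Qed.

Section InducedSubgraph.
Variables (G : sgraph) (P : pred (vert G)).

Definition induced_adj : rel {v | P v} := fun x y => adj (val x) (val y).
Lemma induced_adj_sym : symmetric induced_adj.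
Proof. by move=> x y; exact: adj_sym. Qed.
Lemma induced_adj_irr : irreflexive induced_adj.
Proof. by move=> x; exact: adj_irr. Qed.
Definition induced : sgraph := SGraph induced_adj_sym induced_adj_irr.

Lemma has_subgraph_induced F : has_subgraph F induced -> has_subgraph F G.
Proof. by case=> f [fi fa]; exists (val \o f); split=> [x y /val_inj/fi | x y /fa]. Qed.

End InducedSubgraph.

Lemma has_subgraph_dunion (F L : sgraph) a (z : vert F) :
  (forall k, k != z -> adj z k) -> has_subgraph F (dunion a L) -> has_subgraph F L.
Proof.
move=> z_dom [f [fi fa]].
have same_copy k : (f k).1 = (f z).1.
  by case: (eqVneq k z) => [-> // | /z_dom /fa /andP[/eqP <-]].
exists (fun k => (f k).2); split=> [k k' e | k k' /fa /andP[]//].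
by apply: fi; rewrite [f k]surjective_pairing [f k']surjective_pairing !same_copy e.
Qed.

Lemma colorable_Kcomp_free w (G : sgraph) (c : vert G -> 'I_w) :
  (forall x y, adj x y -> c x != c y) -> ~ has_subgraph (Kcomp w.+1) G.
Proof.
move=> c_proper [f [fi fa]].
have cfi : injective (c \o f).
  move=> i j /= e; case: (eqVneq i j) => // nij.
  by have := c_proper _ _ (fa _ _ nij); rewrite e eqxx.
by have := leq_card _ cfi; rewrite !card_ord ltnn.
Qed.

Lemma Turan_Kcomp_free w n : 0 < w -> ~ has_subgraph (Kcomp w.+1) (Turan w n).
Proof.
move=> w_gt0; pose c (x : 'I_n) := Ordinal (ltn_pmod x w_gt0).
apply: (@colorable_Kcomp_free w (Turan w n) c).
by move=> x y; apply: contraNneq=> -[e]; rewrite /= /Tadj e eqxx.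
Qed.

Lemma Turan_Ksplit_free w n u D q : 0 < w -> q * w <= n -> n <= D + u * q ->
  ~ has_subgraph (Ksplit u D.+1) (Turan w n).
Proof.
move=> w_gt0 qw_le_n n_le [f [fi fa]].
pose cl i := f (lshift D.+1 i); pose ind j := f (rshift u j).
have cl_res i i' : i != i' -> cl i %% w != cl i' %% w.
  move=> ni; apply: (fa (lshift _ i) (lshift _ i')); rewrite /= /Sadj /= ltn_ord andbT.
  by rewrite (inj_eq (@lshift_inj _ _)).
have ind_res i j : cl i %% w != ind j %% w.
  apply: (fa (lshift _ i) (rshift _ j)); rewrite /= /Sadj /= ltn_ord andbT.
  by apply/eqP=> /(congr1 val) /=; have := ltn_ord i; lia.
have resD m t : (m %% w + t * w) %% w = m %% w by rewrite addnC modnMDl modn_mod.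
have slot_lt i (t : 'I_q) : cl i %% w + t * w < n.
  by have := ltn_pmod (cl i) w_gt0; have := leq_mul (ltn_ord t) (leqnn w); nia.
(* The [D.+1] common neighbours and [q] vertices of the part of each clique
   vertex are pairwise distinct vertices of [T_w(n)]. *)
pose slot (s : 'I_D.+1 + 'I_u * 'I_q) : 'I_n :=
  match s with inl j => ind j | inr it => Ordinal (slot_lt it.1 it.2) end.
have slot_inj : injective slot.
  case=> [j | [i t]] [j' | [i' t']] /=.
  - by move/fi/rshift_inj->.
  - move/(congr1 val)/(congr1 (modn^~ w)); rewrite /= resD => e.
    by have := ind_res i' j; rewrite e eqxx.
  - move/(congr1 val)/(congr1 (modn^~ w)); rewrite /= resD => e.
    by have := ind_res i j'; rewrite e eqxx.
  move/(congr1 val) => /= e.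
  have ii' : i = i'.
    apply/eqP; apply: contraTT isT => /cl_res.
    by have := congr1 (modn^~ w) e; rewrite /= !resD => ->; rewrite eqxx.
  subst i'; move/addnI/eqP: e; rewrite eqn_pmul2r // => /eqP tt'.
  by congr (inr (_, _)); exact: val_inj.
by have := leq_card _ slot_inj; rewrite card_sum card_prod !card_ord; lia.
Qed.

Section UnionTuranKcomp.
Variables w n u a r : nat.

(* [a] copies of [T_w(n)] together with the first [u] vertices of [r] further
   copies, which span a [K_u] when [u < w]. *)
Definition union_Turan_Kcomp : sgraph :=
  induced (fun v : vert (dunion (a + r) (Turan w n)) => (v.1 < a) || ((v.2 : 'I_n) < u)).

Let tvert (i : 'I_(a + r)) (x : 'I_n) (h : (i < a) || (x < u)) : vert union_Turan_Kcomp :=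
  exist _ (i, x) h.

Lemma kcount_union_Turan_Kcomp : 0 < u -> u < w -> u <= n ->
  kcount u union_Turan_Kcomp = a * kcount u (Turan w n) + r.
Proof.
move=> u_gt0 u_lt_w u_le_n; rewrite !kcount_cliques.
pose copy (v : vert union_Turan_Kcomp) := (val v).1.
rewrite (@card_cliques_partition _ _ _ copy) //; last by move=> v v' /andP[/eqP].
rewrite big_split_ord /=; congr (_ + _).
  rewrite -[X in X * _]card_ord -sum_nat_const; apply: eq_bigr=> i _.
  pose e x := @tvert (lshift r i) x (introT orP (or_introl (ltn_ord i))).
  apply: (@card_cliques_image _ _ (Turan w n) e (fun v => (val v).1 == lshift r i)).
  - by move=> x y /(congr1 val) [].
  - by move=> x y; rewrite /= /induced_adj /= /Dadj /= eqxx.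
  split=> [/eqP vi | [x ->]] //=; exists (val v).2; apply: val_inj => /=.
  by case: v vi => -[i' x] /= _ ->.
rewrite -[r in RHS]card_ord -sum1_card; apply: eq_bigr=> i _.
rewrite -(card_cliques_Kcomp u).
pose e (x : 'I_u) :=
  @tvert (rshift a i) (widen_ord u_le_n x) (introT orP (or_intror (ltn_ord x))).
apply: (@card_cliques_image _ _ (Kcomp u) e (fun v => (val v).1 == rshift a i)).
- by move=> x y /(congr1 val) [] /val_inj.
- move=> x y; rewrite /= /induced_adj /= /Dadj /= eqxx /Tadj /Kadj /=.
  by rewrite !modn_small ?(ltn_trans (ltn_ord _) u_lt_w).
case=> -[i' x] /= h; split=> [/eqP vi | [y [-> _]]] //=; subst i'.
have x_lt_u : x < u by move: h; rewrite /= ltnNge leq_addr.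
by exists (Ordinal x_lt_u); apply: val_inj; congr (_, _); exact: val_inj.
Qed.

Lemma has_subgraph_union_Turan_Kcomp F (z : vert F) :
  (forall k, k != z -> adj z k) ->
  has_subgraph F union_Turan_Kcomp -> has_subgraph F (Turan w n).
Proof. by move=> z_dom /has_subgraph_induced; exact: has_subgraph_dunion z_dom. Qed.

Lemma Ncount_dunion_Turan_le H :
  Ncount H (dunion a (Turan w n)) <= Ncount H union_Turan_Kcomp.
Proof.
pose h (v : 'I_a * 'I_n) := @tvert (lshift r v.1) v.2 (introT orP (or_introl (ltn_ord v.1))).
apply: (@leq_Ncount H (dunion a (Turan w n)) union_Turan_Kcomp h).
  by move=> [i x] [j y] /(congr1 val) [/val_inj -> ->].
by move=> [i x] [j y] /andP[/= /eqP -> xy]; rewrite /= /induced_adj /= /Dadj /= eqxx.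
Qed.

End UnionTuranKcomp.

Lemma Kcomp_adj0 m (k : vert (Kcomp m.+1)) : k != ord0 -> adj (ord0 : vert (Kcomp m.+1)) k.
Proof. by rewrite eq_sym. Qed.

Lemma Ksplit_adj_clique u m (z : vert (Ksplit u m)) : z < u -> forall k, k != z -> adj z k.
Proof. by move=> z_lt_u k k_neq_z; rewrite /= /Sadj z_lt_u eq_sym k_neq_z. Qed.

Theorem mainTheorem9 (R : realType) (Delta omega u p : nat) (H : sgraph) :
  (2 <= u.+1)%N -> (u.+1 <= omega)%N -> (omega <= Delta)%N -> (1 <= p)%N ->
  has_subgraph (Kcomp u) H ->
  let L := Turan omega (Delta + u * (Delta %/ (omega - u)))%N in
  (((Ncount H (dunion (p %/ kcount u L) L))%:R : R)%:E <=
     ex_u R u p H (fun Fm => Fm = Ksplit u Delta.+1 \/ Fm = Kcomp omega.+1))%E.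
Proof.
move=> /[!ltnS] u_gt0 u_lt_w w_le_D _ _; cbv zeta; set L := Turan omega _.
set q := (Delta %/ (omega - u))%N; set n := (Delta + u * q)%N.
set a := (p %/ kcount u L)%N; set r := (p - a * kcount u L)%N.
set G := union_Turan_Kcomp omega n u a r.
have qw_le_n : (q * omega <= n)%N.
  by have := leq_divM Delta (omega - u); rewrite -/q mulnBr; lia.
have kG : kcount u G = p.
  by rewrite kcount_union_Turan_Kcomp ?subnKC ?leq_divM //; lia.
apply: (@le_trans _ _ (Ncount H G)%:R%:E).
  by rewrite lee_fin ler_nat Ncount_dunion_Turan_le.
apply: ereal_sup_ubound; right; exists G; split=> // Fm [-> | ->].
  have z_dom := @Ksplit_adj_clique u Delta.+1 (Ordinal (ltn_addr Delta.+1 u_gt0)) u_gt0.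
  move/(has_subgraph_union_Turan_Kcomp z_dom).
  by apply: (Turan_Ksplit_free (q := q)); lia.
move/(has_subgraph_union_Turan_Kcomp (@Kcomp_adj0 omega)).
by apply: Turan_Kcomp_free; lia.
Qed.
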